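(* Let $S$ be a finite set, $\mathcal X=S^N$, $\mu$ uniform on $\mathcal X$, $P$ a Markov kernel on $\mathcal X$ reversible with respect to $\mu$ (of coordinate-replacement form), $\Omega\subseteq\mathcal X$ a $P$-invariant set with $\mu(\Omega)>0$, $\pi=\mu(\cdot\mid\Omega)$, and $G\subseteq\Omega$ with $\pi(G)>0$. Let $K_G(x,y)=P(x,y)$ for $x,y\in G$ (the kernel $P$ killed on exiting $G$) and $\pi_G=\pi(\cdot\mid G)$. Assume that every nonnegative $F:\mathcal X\to\mathbb R$ with $\operatorname{supp}(F)\subseteq G$ satisfies $\operatorname{Ent}_\mu(F^2)\le A\,\mathcal E_P^\mu(F,F)$. Then every nonnegative $f:G\to\mathbb R$ satisfies \[ \operatorname{Ent}_{\pi_G}(f^2)\le A\,\mathcal E^{\pi_G}_{K_G}(f,f). \]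
   Context: A coordinate-replacement kernel has the form $Pf(x)=\frac1N\sum_{i}\sum_{u\in S}K_i(x_{-i};x_i,u)f(x^{i,u})$ with each $K_i(x_{-i})$ a Markov kernel on $S$ reversible w.r.t. uniform measure ($x^{i,u}$: replace coordinate $i$ by $u$). $\operatorname{Ent}_\rho(f^2)=\rho(f^2\log f^2)-\rho(f^2)\log\rho(f^2)$. For a Markov kernel, $\mathcal E^\rho_K(f,f)=\frac12\sum_{x,y}\rho(x)K(x,y)(f(x)-f(y))^2$; for the substochastic kernel $K_G$ (nonnegative, row sums at most one), $\mathcal E^{\pi_G}_{K_G}(f,f)=\langle f,(I-K_G)f\rangle_{\pi_G}$. *)

From HB Require Import structures.
From mathcomp Require Import all_boot all_order all_algebra.
From mathcomp Require Import reals exp.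
Set Implicit Arguments. Unset Strict Implicit. Unset Printing Implicit Defensive.
Import Order.TTheory GRing.Theory Num.Theory.
Local Open Scope ring_scope.

Section Defs.
Variables (R : realType) (S : finType) (N : nat).

Definition config := {ffun 'I_N -> S}.

Definition repl (x : config) (i : 'I_N) (u : S) : config :=
  [ffun j => if j == i then u else x j].

Definition unif (x : config) : R := (#|{: config}|%:R)^-1.

Definition cond (rho : config -> R) (B : {set config}) (x : config) : R :=
  if x \in B then rho x / (\sum_(y in B) rho y) else 0.

Definition Ent (rho : config -> R) (g : config -> R) : R :=
  \sum_x rho x * (g x * ln (g x))
  - (\sum_x rho x * g x) * ln (\sum_x rho x * g x).

Definition dirichlet (rho : config -> R) (K : config -> config -> R)
  (f : config -> R) : R :=
  2^-1 * \sum_x \sum_y rho x * K x y * (f x - f y) ^+ 2.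

(* Dirichlet form of a substochastic kernel: <f, (I - K) f>_rho *)
Definition dirichlet_sub (rho : config -> R) (K : config -> config -> R)
  (f : config -> R) : R :=
  \sum_x rho x * (f x * (f x - \sum_y K x y * f y)).

(* coordinate kernels K i x a b = K_i(x_{-i}; a, b): depend only on x_{-i},
   Markov kernels on S, reversible w.r.t. the uniform measure (symmetric) *)
Definition coord_kernels (K : 'I_N -> config -> S -> S -> R) : Prop :=
  [/\ (forall i (x y : config), (forall j, j != i -> x j = y j) -> K i x = K i y),
      (forall i x a b, 0 <= K i x a b),
      (forall i x a, \sum_b K i x a b = 1) &
      (forall i x a b, K i x a b = K i x b a)].

Definition coord_P (K : 'I_N -> config -> S -> S -> R) (x y : config) : R :=
  (N%:R)^-1 * \sum_i \sum_u K i x (x i) u * (y == repl x i u)%:R.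

Definition P_invariant (P : config -> config -> R) (Om : {set config}) : Prop :=
  forall x y, x \in Om -> y \notin Om -> P x y = 0.

Definition killed (P : config -> config -> R) (G : {set config})
  (x y : config) : R :=
  if (x \in G) && (y \in G) then P x y else 0.

End Defs.

(* Extend f by zero outside G to F.  Since pi_G is the uniform measure mu
   conditioned on G, Ent_{pi_G}(f^2) = (Ent_mu(F^2) + mu(F^2) ln mu(G)) / mu(G),
   and ln mu(G) <= 0.  On the other side, reversibility and stochasticity of P
   give E_P^mu(F,F) = <F, (I - P) F>_mu, and since F vanishes off G only the
   kernel killed outside G contributes: E_P^mu(F,F) = mu(G) E_{K_G}^{pi_G}(f,f).
   Dividing the hypothesis for F by mu(G) yields the claim. *)
From HB Require Import structures.
From mathcomp Require Import all_boot all_order all_algebra.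
From mathcomp Require Import reals exp boolp.
From mathcomp Require Import ring.
Import Order.TTheory GRing.Theory Num.Theory.
Local Open Scope ring_scope.
Set Implicit Arguments. Unset Strict Implicit.

Section Functionals.
Variables (R : realType) (S : finType) (N : nat).
Local Notation X := (config S N).
Implicit Types (rho : X -> R) (g f : X -> R) (P K : X -> X -> R).

Lemma eq_Ent_supp rho g g' :
  (forall x, rho x != 0 -> g x = g' x) -> Ent rho g = Ent rho g'.
Proof.
move=> gg'.
have E (h : R -> R) x : rho x * h (g x) = rho x * h (g' x).
  by have [->|/gg' ->] := eqVneq (rho x) 0; rewrite ?mul0r.
rewrite /Ent (eq_bigr _ (fun x _ => E (fun t => t * ln t) x)).
by rewrite (eq_bigr _ (fun x _ => E id x)).
Qed.

Lemma eq_Ent_weights rho rho' g :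
  (forall x, g x != 0 -> rho x = rho' x) -> Ent rho g = Ent rho' g.
Proof.
move=> rr'.
have E (h : R -> R) x : h 0 = 0 -> rho x * h (g x) = rho' x * h (g x).
  by move=> h0; have [->|/rr' ->] := eqVneq (g x) 0; rewrite ?h0 ?mulr0.
rewrite /Ent (eq_bigr _ (fun x _ => E (fun t => t * ln t) x (mul0r _))).
by rewrite (eq_bigr _ (fun x _ => E id x erefl)).
Qed.

Lemma Ent_scale_le rho g k :
  1 <= k -> 0 <= \sum_x rho x * g x ->
  Ent (fun x => k * rho x) g <= k * Ent rho g.
Proof.
move=> k_ge1 m_ge0; rewrite /Ent.
set a := \sum_x rho x * _; set m := \sum_x rho x * g x.
have sumZ (h : X -> R) : \sum_x k * rho x * h x = k * \sum_x rho x * h x.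
  by rewrite mulr_sumr; apply: eq_bigr => x _; rewrite mulrA.
rewrite !sumZ -/a -/m.
have [->|m_neq0] := eqVneq m 0; first by rewrite !(mulr0, mul0r, subr0).
have m_gt0 : 0 < m by rewrite lt_def m_neq0.
have k_gt0 : 0 < k := lt_le_trans ltr01 k_ge1.
rewrite lnM ?posrE // -subr_ge0.
have -> : k * (a - m * ln m) - (k * a - k * m * (ln k + ln m)) = k * m * ln k.
  by ring.
by rewrite mulr_ge0 ?ln_ge0 // mulr_ge0 ?ltW.
Qed.

Lemma dirichlet_reversible rho P f :
  (forall x y, rho x * P x y = rho y * P y x) ->
  (forall x, \sum_y P x y = 1) ->
  dirichlet rho P f = dirichlet_sub rho P f.
Proof.
move=> rev stoch.
set T1 := \sum_x \sum_y rho x * P x y * f x ^+ 2.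
set T2 := \sum_x \sum_y rho x * P x y * f y ^+ 2.
set T3 := \sum_x \sum_y rho x * P x y * (f x * f y).
have expand : \sum_x \sum_y rho x * P x y * (f x - f y) ^+ 2 = T1 + T2 - 2 * T3.
  rewrite !mulr_sumr -!big_split -sumrB /=; apply: eq_bigr => x _.
  rewrite !mulr_sumr -big_split -sumrB /=; apply: eq_bigr => y _; ring.
have T21 : T2 = T1.
  rewrite /T2 exchange_big /=; apply: eq_bigr => x _; apply: eq_bigr => y _.
  by rewrite rev.
have T1E : T1 = \sum_x rho x * f x ^+ 2.
  by apply: eq_bigr => x _; rewrite -mulr_suml -mulr_sumr stoch mulr1.
have T3E : T3 = \sum_x rho x * f x * \sum_y P x y * f y.
  by apply: eq_bigr => x _; rewrite mulr_sumr; apply: eq_bigr => y _; ring.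
have subE : dirichlet_sub rho P f = T1 - T3.
  by rewrite T1E T3E /dirichlet_sub -sumrB; apply: eq_bigr => x _; ring.
by rewrite /dirichlet expand T21 subE; field.
Qed.

Lemma dirichlet_sub_scale rho K f k :
  dirichlet_sub (fun x => k * rho x) K f = k * dirichlet_sub rho K f.
Proof. by rewrite /dirichlet_sub mulr_sumr; apply: eq_bigr => x _; rewrite -mulrA. Qed.

Lemma dirichlet_sub_killed rho P (G : {set X}) f :
  dirichlet_sub rho P (fun x => if x \in G then f x else 0) =
  dirichlet_sub (fun x => if x \in G then rho x else 0) (killed P G) f.
Proof.
rewrite /dirichlet_sub; apply: eq_bigr => x _.
case: ifP => xG; last by rewrite !mul0r mulr0.
congr (_ * (_ * (_ - _))); apply: eq_bigr => y _.
by rewrite /killed xG /=; case: (y \in G); rewrite ?mulr0 ?mul0r.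
Qed.

Lemma condE rho (B : {set X}) :
  cond rho B = fun x => (\sum_(y in B) rho y)^-1 * (if x \in B then rho x else 0).
Proof. by apply/funext => x; rewrite /cond; case: ifP; rewrite ?mulr0 // mulrC. Qed.

Lemma sum_cond rho (Om G : {set X}) :
  G \subset Om ->
  \sum_(x in G) cond rho Om x = (\sum_(x in G) rho x) / \sum_(x in Om) rho x.
Proof.
move=> GOm; rewrite mulr_suml; apply: eq_bigr => x xG.
by rewrite /cond (subsetP GOm x xG).
Qed.

Lemma cond_cond rho (Om G : {set X}) :
  G \subset Om -> \sum_(x in Om) rho x != 0 -> cond (cond rho Om) G = cond rho G.
Proof.
move=> GOm Om_neq0; apply/funext => x; rewrite {1}/cond sum_cond //.
rewrite /cond; case: ifP => // xG; rewrite (subsetP GOm x xG).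
by rewrite invf_div mulrA divfK.
Qed.

Lemma sum_unif_le1 (B : {set X}) : \sum_(x in B) @unif R S N x <= 1.
Proof.
rewrite sumr_const /unif; have [X0|X_gt0] := posnP #|{: X}|.
  by rewrite X0 invr0 mul0rn ler01.
apply: le_trans (_ : (#|{: X}|%:R)^-1 *+ #|{: X}| <= 1).
  by rewrite ler_pMn2l ?invr_gt0 ?ltr0n ?max_card.
by rewrite -[leLHS]mulr_natr mulVf // pnatr_eq0 -lt0n.
Qed.

End Functionals.

Section CoordinateKernel.
Variables (R : realType) (S : finType) (N : nat).
Variable K : 'I_N -> config S N -> S -> S -> R.
Hypothesis HK : coord_kernels K.

Lemma coord_P_summandE i (x y : config S N) :
  \sum_u K i x (x i) u * (y == repl x i u)%:R =
  if [forall j, (j != i) ==> (y j == x j)] then K i x (x i) (y i) else 0.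
Proof.
case: ifP => [/forallP y_off_i|/negbT/forallPn[j]].
  rewrite (bigD1 (y i)) //= big1 => [|u u_neq].
    suff -> : y == repl x i (y i) by rewrite mulr1 addr0.
    apply/eqP/ffunP => j; rewrite ffunE; case: eqP => [->//|/eqP j_neq].
    by apply/eqP; have := y_off_i j; rewrite j_neq.
  case: eqP => [yE|]; last by rewrite mulr0.
  by move: u_neq; rewrite yE ffunE !eqxx.
rewrite negb_imply => /andP[j_neq yj_neq]; rewrite big1 // => u _.
case: eqP => [yE|]; last by rewrite mulr0.
by move: yj_neq; rewrite yE ffunE (negbTE j_neq) eqxx.
Qed.

Lemma coord_P_sym x y : coord_P K x y = coord_P K y x.
Proof.
rewrite /coord_P; congr (_ * _); apply: eq_bigr => i _.
rewrite !coord_P_summandE.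
have -> : [forall j, (j != i) ==> (y j == x j)] = [forall j, (j != i) ==> (x j == y j)].
  by apply: eq_forallb => j; rewrite (eq_sym (y j)).
case: ifP => // /forallP agree.
have [local _ _ symm] := HK.
rewrite (local i x y); first exact: symm.
by move=> j j_neq; apply/eqP; have := agree j; rewrite j_neq.
Qed.

Lemma coord_P_stochastic x : (0 < N)%N -> \sum_y coord_P K x y = 1.
Proof.
move=> N_gt0; rewrite /coord_P -mulr_sumr exchange_big /=.
have move_sum i u : \sum_y K i x (x i) u * (y == repl x i u)%:R = K i x (x i) u.
  rewrite (bigD1 (repl x i u)) //= eqxx big1 => [|y /negbTE ->].
    by rewrite mulr1 addr0.
  by rewrite mulr0.
under eq_bigr => i _ do rewrite exchange_big /=.
under eq_bigr => i _ do under eq_bigr => u _ do rewrite move_sum.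
have [_ _ row1 _] := HK.
under eq_bigr => i _ do rewrite row1.
by rewrite sumr_const card_ord mulVf // pnatr_eq0 -lt0n.
Qed.

Lemma coord_P_unif_reversible x y :
  @unif R S N x * coord_P K x y = @unif R S N y * coord_P K y x.
Proof. by rewrite /unif coord_P_sym. Qed.

End CoordinateKernel.

Theorem proposition2p3 (R : realType) (S : finType) (N : nat)
  (K : 'I_N -> config S N -> S -> S -> R)
  (Om G : {set config S N}) (A : R) :
  (0 < N)%N ->
  coord_kernels K ->
  P_invariant (coord_P K) Om ->
  0 < \sum_(x in Om) @unif R S N x ->
  G \subset Om ->
  0 < \sum_(x in G) cond (@unif R S N) Om x ->
  (forall F : config S N -> R,
     (forall x, 0 <= F x) -> (forall x, x \notin G -> F x = 0) ->
     Ent (@unif R S N) (fun x => F x ^+ 2) <= A * dirichlet (@unif R S N) (coord_P K) F) ->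
  forall f : config S N -> R,
    (forall x, x \in G -> 0 <= f x) ->
    Ent (cond (cond (@unif R S N) Om) G) (fun x => f x ^+ 2)
      <= A * dirichlet_sub (cond (cond (@unif R S N) Om) G) (killed (coord_P K) G) f.
Proof.
move=> N_gt0 HK _ Om_gt0 GOm G_gt0 LSI f f_ge0.
set mu := @unif R S N; set mG := \sum_(x in G) mu x.
set F := fun x => if x \in G then f x else 0.
have mG_gt0 : 0 < mG by move: G_gt0; rewrite sum_cond // pmulr_lgt0 ?invr_gt0.
have EntF : Ent (fun x => mG^-1 * (if x \in G then mu x else 0)) (fun x => f x ^+ 2)
    = Ent (fun x => mG^-1 * mu x) (fun x => F x ^+ 2).
  rewrite (@eq_Ent_supp _ _ _ _ _ (fun x => F x ^+ 2)) => [|x]; last first.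
    by rewrite /F; case: (x \in G); rewrite ?mulr0 ?eqxx.
  by apply: eq_Ent_weights => x; rewrite /F; case: (x \in G); rewrite ?expr0n ?eqxx.
rewrite cond_cond ?gt_eqF // condE -/mG EntF dirichlet_sub_scale.
rewrite -dirichlet_sub_killed -/F -dirichlet_reversible; last first.
- by move=> x; exact: coord_P_stochastic.
- exact: coord_P_unif_reversible.
apply: le_trans (Ent_scale_le _ _) _.
- by rewrite invf_ge1 // sum_unif_le1.
- by apply: sumr_ge0 => x _; rewrite mulr_ge0 ?invr_ge0 ?ler0n ?sqr_ge0.
rewrite mulrCA ler_wpM2l ?invr_ge0 ?(ltW mG_gt0) //; apply: LSI => [x|x /negbTE].
  by rewrite /F; case: ifP => // /f_ge0.
by rewrite /F => ->.
Qed.
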